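(* Let $\mathfrak{G}$ be a CFSTR in which every species $X_i$ satisfies $\operatorname{TM}(X_i)\le 2$. Then $\mathfrak{G}$ passes the Jacobian Criterion, and consequently, under mass-action kinetics, $\mathfrak{G}$ does not admit multiple steady states (i.e. for no choice of positive rate constants does the mass-action system have two or more distinct positive steady states).
   Context: A chemical reaction network has species $X_1,\dots,X_s$ and a finite set of reactions $y\to y'$ with complexes $y,y'\in\mathbb{Z}_{\ge0}^s$, $y\neq y'$ ($y$ the reactant complex, $y'$ the product complex; $y_i$ is the stoichiometric coefficient of $X_i$ in $y$); every species appears in some complex. A flow reaction is an inflow $0\to X_i$ or an outflow $X_i\to 0$; all other reactions are non-flow. A reaction $y\to y'$ is reversible if $y'\to y$ is also a reaction. A CFSTR is a network containing the outflow $X_i\to0$ for every species $X_i$. Total molecularity: list the non-flow reactions as $y_1\to y_1',\dots,y_l\to y_l'$ (not reversible) and $y_{l+1}\rightleftarrows y_{l+1}',\dots,y_{l+k}\rightleftarrows y_{l+k}'$ (each reversible pair listed once); then $\operatorname{TM}(X_i)=\sum_{j=1}^{l+k}(y_{ji}+y'_{ji})$. Square networks and orientation: for a list of $n$ reactions $y_k\to y_k'$ on $n$ species, the reactant matrix $M$ is the $n\times n$ matrix with $k$-th row $y_k$ and the reaction matrix $R$ has $k$-th row $y_k-y_k'$ (columns indexed by the species); the orientation is $\operatorname{Or}=\operatorname{sign}(\det M\det R)\in\{-1,0,1\}$, and the empty network has orientation $+1$. Jacobian Criterion: a CFSTR $\mathfrak{G}$ with $s$ species passes the Jacobian Criterion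 if for every choice of $s$ distinct reactions of $\mathfrak{G}$, none of which is an inflow reaction, the $s\times s$ reactant and reaction matrices of these reactions (columns indexed by all $s$ species of $\mathfrak G$) give nonnegative orientation. (By results of Craciun and Feinberg this is equivalent to the determinant of the negative Jacobian of the mass-action vector field $f(x)=\sum_k\kappa_k x^{y_k}(y_k'-y_k)$ being positive for all $x\in\mathbb{R}^s_{>0}$ and all rate constants $\kappa>0$, and it implies that the CFSTR has no multiple positive steady states.) *)

From HB Require Import structures.
From mathcomp Require Import all_boot all_order all_algebra.
Set Implicit Arguments. Unset Strict Implicit. Unset Printing Implicit Defensive.
Import Order.TTheory GRing.Theory Num.Theory.

Definition cplx (s : nat) := {ffun 'I_s -> nat}.
(* A reaction y -> y' is the pair (y, y'). *)
Definition reaction (s : nat) := (cplx s * cplx s)%type.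
(* A network on s species: a finite set of reactions, as a duplicate-free list. *)
Definition network (s : nat) := seq (reaction s).

Definition zero_cplx (s : nat) : cplx s := [ffun => 0%N].
Definition unit_cplx (s : nat) (i : 'I_s) : cplx s := [ffun j => nat_of_bool (j == i)].

Definition rev_reaction (s : nat) (r : reaction s) : reaction s := (r.2, r.1).

Definition is_inflow (s : nat) (r : reaction s) : bool :=
  (r.1 == zero_cplx s) && [exists i, r.2 == unit_cplx i].
Definition is_outflow (s : nat) (r : reaction s) : bool :=
  [exists i, r.1 == unit_cplx i] && (r.2 == zero_cplx s).
Definition is_flow (s : nat) (r : reaction s) : bool := is_inflow r || is_outflow r.

Definition wf_network (s : nat) (G : network s) : Prop :=
  [/\ uniq G,
      (forall r, r \in G -> r.1 != r.2) &
      (forall i : 'I_s, exists2 r, r \in G & (0 < r.1 i)%N || (0 < r.2 i)%N)].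

Definition is_CFSTR (s : nat) (G : network s) : Prop :=
  wf_network G /\ forall i : 'I_s, (unit_cplx i, zero_cplx s) \in G.

(* Total molecularity: sum over non-flow reactions, each reversible pair counted
   once (the representative being the one occurring first in the list G). *)
Definition TM (s : nat) (G : network s) (i : 'I_s) : nat :=
  \sum_(r <- G | ~~ is_flow r &&
                 ((rev_reaction r \notin G) || (index r G < index (rev_reaction r) G))%N)
     (r.1 i + r.2 i)%N.

Definition reactant_mx (n : nat) (k : 'I_n -> reaction n) : 'M[int]_n :=
  \matrix_(a, i) Posz ((k a).1 i).
Definition reaction_mx (n : nat) (k : 'I_n -> reaction n) : 'M[int]_n :=
  \matrix_(a, i) (Posz ((k a).1 i) - Posz ((k a).2 i))%R.

Definition orientation (n : nat) (k : 'I_n -> reaction n) : int :=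
  sgz (\det (reactant_mx k) * \det (reaction_mx k))%R.

Definition passes_Jacobian_criterion (s : nat) (G : network s) : Prop :=
  forall k : 'I_s -> reaction s, injective k ->
    (forall a, k a \in G) -> (forall a, ~~ is_inflow (k a)) ->
    (0 <= orientation k)%R.

Definition monomial (R : ringType) (s : nat) (x : 'I_s -> R) (y : cplx s) : R :=
  (\prod_(j < s) x j ^+ y j)%R.

Definition mass_action (R : ringType) (s : nat) (G : network s)
    (kappa : reaction s -> R) (x : 'I_s -> R) (i : 'I_s) : R :=
  (\sum_(r <- G) kappa r * monomial x r.1 * ((r.2 i)%:R - (r.1 i)%:R))%R.

Definition admits_multiple_steady_states (R : realFieldType) (s : nat) (G : network s) : Prop :=
  exists kappa : reaction s -> R,
    (forall r, r \in G -> (0 < kappa r)%R) /\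
    exists x1 x2 : 'I_s -> R,
      [/\ (forall i, (0 < x1 i)%R), (forall i, (0 < x2 i)%R),
          (forall i, mass_action G kappa x1 i = 0%R),
          (forall i, mass_action G kappa x2 i = 0%R) & x1 <> x2].

From HB Require Import structures.
From mathcomp Require Import all_boot all_order all_algebra perm.
From mathcomp Require Import ring lra zify.
From Stdlib Require Import Classical FunctionalExtensionality.
Set Implicit Arguments. Unset Strict Implicit. Unset Printing Implicit Defensive.
Import Order.TTheory GRing.Theory Num.Theory.
Local Open Scope ring_scope.

(* Let k 0, ..., k (s-1) be distinct non-inflow
   reactions of a network with all TM <= 2, reaction a consuming species a.
   Then their reaction matrix R has det R >= 0: either two of them form a
   reversible pair (opposite rows, det R = 0), or R is near-unit -- every
   outflow row is a unit row, and in the column of a non-flow reaction the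
   molecularity budget TM <= 2 forces the shape e_i + t e_b with |t| <= 1.
   Near-unit matrices have nonnegative determinant, by induction on the size
   through principal minors (det_near_unit_ge0).

   In the Leibniz expansion of det M * det R, every term
   is a product of reactant coefficients times det R with permuted rows, and
   when the coefficients are nonzero the core applies.

   For positive states x1, x2, the discrete mean
   value theorem for monomials gives f(x2) - f(x1) = L (x1 - x2) for a secant
   Jacobian L.  Expanding det L by multilinearity in the rows, choosing all
   outflows gives a positive term and every other choice a nonnegative one by
   the core; so L is invertible and x1 = x2. *)

Section NearUnitMatrices.
Variable R : realDomainType.

Definition kdelta n (i j : 'I_n) : R := (i == j)%:R.

Definition perturbed_unit_col n (M : 'M[R]_n) (j : 'I_n) : Prop :=
  exists b (t : R), `|t| <= 1 /\ forall i, M i j = kdelta i j + t * kdelta i b.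

Definition unit_row n (M : 'M[R]_n) (j : 'I_n) : Prop :=
  forall m, M j m = kdelta j m.

Definition near_unit_mx n (M : 'M[R]_n) : Prop :=
  forall j, perturbed_unit_col M j \/ unit_row M j.

Definition principal_minor n (M : 'M[R]_n.+1) (j : 'I_n.+1) : 'M[R]_n :=
  row' j (col' j M).

Lemma principal_minorE n (M : 'M[R]_n.+1) j i k :
  principal_minor M j i k = M (lift j i) (lift j k).
Proof. by rewrite !mxE. Qed.

Lemma kdeltaxx n (i : 'I_n) : kdelta i i = 1.
Proof. by rewrite /kdelta eqxx. Qed.

Lemma kdelta_neq n (i j : 'I_n) : i != j -> kdelta i j = 0.
Proof. by move=> /negbTE ij; rewrite /kdelta ij. Qed.

Lemma kdelta_lift n (j : 'I_n.+1) i k : kdelta (lift j i) (lift j k) = kdelta i k.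
Proof. by rewrite /kdelta (inj_eq lift_inj). Qed.

Lemma kdelta_lift_l n (j : 'I_n.+1) i : kdelta (lift j i) j = 0.
Proof. by rewrite kdelta_neq // eq_sym neq_lift. Qed.

Lemma kdelta_lift_r n (j : 'I_n.+1) i : kdelta j (lift j i) = 0.
Proof. by rewrite kdelta_neq // neq_lift. Qed.

Lemma near_unit_minor n (M : 'M[R]_n.+1) j :
  near_unit_mx M -> near_unit_mx (principal_minor M j).
Proof.
move=> hM k; case: (hM (lift j k)) => [[b [t [ht hcol]]]|hrow]; [left|right].
- case: (unliftP j b) hcol => [b' ->|->] hcol.
    by exists b', t; split=> // i; rewrite principal_minorE hcol !kdelta_lift.
  exists k, 0; split; first by rewrite normr0.
  by move=> i; rewrite principal_minorE hcol kdelta_lift kdelta_lift_l; ring.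
- by move=> m; rewrite principal_minorE hrow kdelta_lift.
Qed.

Lemma cofactor_diag n (M : 'M[R]_n.+1) j :
  cofactor M j j = \det (principal_minor M j).
Proof. by rewrite /cofactor -signr_odd addnn odd_double expr0 mul1r. Qed.

Lemma det_unit_row n (M : 'M[R]_n.+1) j :
  unit_row M j -> \det M = \det (principal_minor M j).
Proof.
move=> hj; rewrite (expand_det_row _ j) (bigD1 j) //= big1 ?addr0.
  by rewrite hj kdeltaxx mul1r cofactor_diag.
by move=> m mj; rewrite hj kdelta_neq ?mul0r // eq_sym.
Qed.

Lemma det_diag_col n (M : 'M[R]_n.+1) j c :
  (forall i, M i j = c * kdelta i j) -> \det M = c * \det (principal_minor M j).
Proof.
move=> hj; rewrite (expand_det_col _ j) (bigD1 j) //= big1 ?addr0.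
  by rewrite hj kdeltaxx mulr1 cofactor_diag.
by move=> i ij; rewrite hj kdelta_neq ?mulr0 ?mul0r.
Qed.

Lemma det_add_row_multiple n (A : 'M[R]_n) (b j : 'I_n) (c : R) : b != j ->
  \det (\matrix_(i, m) (if i == b then A b m + c * A j m else A i m)) = \det A.
Proof.
move=> bj; set C := \matrix_(i, m) (if i == b then A j m else A i m).
rewrite (@determinant_multilinear _ _ _ A C b 1 c).
- rewrite (@determinant_alternate _ _ C b j) ?mulr0 ?addr0 ?mul1r //.
  by move=> m; rewrite !mxE eqxx eq_sym (negbTE bj).
- by apply/rowP => m; rewrite !mxE eqxx mul1r.
- by apply/matrixP => i m; rewrite !mxE eq_sym (negbTE (neq_lift _ _)).
- by apply/matrixP => i m; rewrite !mxE eq_sym (negbTE (neq_lift _ _)).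
Qed.

(* If all columns are perturbed unit columns and column j is e_j + t e_b with
   b != j, subtracting t times row j from row b turns column j into e_j; the
   resulting principal minor again has only perturbed unit columns (with
   perturbations of size |t * t'| <= 1). *)
Lemma clear_perturbed_col n (M : 'M[R]_n.+1) j b t :
  (forall k, perturbed_unit_col M k) -> b != j -> `|t| <= 1 ->
  (forall i, M i j = kdelta i j + t * kdelta i b) ->
  exists2 N : 'M[R]_n, \det M = \det N & forall k, perturbed_unit_col N k.
Proof.
move=> hcol bj ht hMj.
set N := \matrix_(i, m) (if i == b then M b m + - t * M j m else M i m).
have hNj i : N i j = 1 * kdelta i j.
  rewrite !mxE; have [->|ib] := eqVneq i b.
    have jb : j != b by rewrite eq_sym.
    by rewrite !hMj !kdeltaxx (kdelta_neq bj) (kdelta_neq jb); ring.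
  by rewrite hMj (kdelta_neq ib); ring.
exists (principal_minor N j).
  by rewrite -(det_add_row_multiple M (- t) bj) (det_diag_col hNj) mul1r.
move=> k; have [bk [tk [htk hk]]] := hcol (lift j k).
have [b' eb'|eb'] := unliftP j b; last by rewrite eb' eqxx in bj.
have [bk' ebk|ebk] := unliftP j bk.
- exists bk', tk; split=> // i.
  rewrite principal_minorE !mxE eb' (inj_eq lift_inj).
  by case: eqVneq => [->|ib]; rewrite !hk ebk !kdelta_lift ?kdelta_lift_r; ring.
- exists b', (- t * tk); split; first by rewrite normrM normrN mulr_ile1.
  move=> i; rewrite principal_minorE !mxE eb' (inj_eq lift_inj).
  case: eqVneq => [->|ib]; rewrite !hk ebk.
    by rewrite !kdelta_lift kdelta_lift_l kdelta_lift_r !kdeltaxx; ring.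
  by rewrite kdelta_lift kdelta_lift_l (kdelta_neq ib); ring.
Qed.

Lemma det_near_unit_ge0 n (M : 'M[R]_n) : near_unit_mx M -> 0 <= \det M.
Proof.
elim: n M => [|n IH] M hM; first by rewrite det_mx00.
have [[j hj]|no_row] := classic (exists j, unit_row M j).
  by rewrite (det_unit_row hj); apply/IH/near_unit_minor.
have hcol k : perturbed_unit_col M k.
  by case: (hM k) => // hk; case: no_row; exists k.
have [b [t [ht hM0]]] := hcol ord0.
have [eb|bj] := eqVneq b ord0.
  rewrite (@det_diag_col _ _ ord0 (1 + t)) => [|i]; last by rewrite hM0 eb; ring.
  apply: mulr_ge0; last by apply/IH/near_unit_minor.
  by move: ht; rewrite ler_norml => /andP[ht _]; lra.
have [N -> hN] := clear_perturbed_col hcol bj ht hM0.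
by apply: IH => k; left.
Qed.

Lemma sum_uniq_le_total (I : finType) (w : I -> nat) (js : seq I) :
  uniq js -> (\sum_(j <- js) w j <= \sum_j w j)%N.
Proof.
move=> ujs; apply: (@uniq_sub_le_big _ addn leq leqnn (fun m n => leq_addr n m)).
- exact: ujs.
- exact: index_enum_uniq.
- by move=> j _; rewrite mem_index_enum.
Qed.

Lemma perturbed_unit_col_of_weights n (M : 'M[R]_n) i (w : 'I_n -> nat) :
  (\sum_j w j <= 2)%N -> (forall j, `|M j i| <= (w j)%:R) ->
  2%:R - (w i)%:R <= M i i -> perturbed_unit_col M i.
Proof.
move=> w_le2 Mw Mii.
have w_sum (js : seq 'I_n) : uniq js -> (\sum_(j <- js) w j <= 2)%N.
  by move=> ujs; apply: leq_trans (sum_uniq_le_total w ujs) w_le2.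
have zero_of_w0 j : w j = 0%N -> M j i = 0.
  by move=> wj; have := Mw j; rewrite wj mulr0n normr_le0 => /eqP.
have Mii_le := le_trans (ler_norm (M i i)) (Mw i).
have wi_le2 : (w i <= 2)%N by have := w_sum [:: i]; rewrite big_cons big_nil addn0; apply.
case: (pickP (fun b => (b != i) && (0 < w b)%N)) => [b /andP[bi wb_pos]|no_other].
  (* another row b carries weight: then w i = w b = 1 and all else vanishes *)
  have wib : (w i + w b <= 2)%N.
    by have := w_sum [:: i; b]; rewrite !big_cons big_nil addn0 /= inE eq_sym bi; apply.
  have wi_pos : (0 < w i)%N.
    rewrite lt0n; apply/eqP => wi0; move: Mii Mii_le; rewrite wi0 mulr0n; lra.
  have wi1 : w i = 1%N by lia.
  have wb1 : w b = 1%N by lia.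
  move: Mii Mii_le; rewrite wi1 mulr1n => Mii Mii_le.
  have Mii1 : M i i = 1 by lra.
  exists b, (M b i); split; first by have := Mw b; rewrite wb1 mulr1n.
  move=> j; have [->|ji] := eqVneq j i.
    have ib : i != b by rewrite eq_sym.
    by rewrite Mii1 kdeltaxx (kdelta_neq ib); ring.
  have [->|jb] := eqVneq j b; first by rewrite kdeltaxx kdelta_neq //; ring.
  rewrite !kdelta_neq // zero_of_w0; first ring.
  have := w_sum [:: i; b; j]; rewrite !big_cons big_nil addn0 /= !inE !negb_or.
  rewrite eq_sym bi eq_sym ji eq_sym jb /= => /(_ isT); lia.
(* only the diagonal entry is nonzero, and it lies in [0, 2] *)
exists i, (M i i - 1); split.
  have wiR : (w i)%:R <= 2 :> R by rewrite ler_nat.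
  by rewrite ler_norml; apply/andP; split; lra.
move=> j; have [->|ji] := eqVneq j i; first by rewrite kdeltaxx; ring.
rewrite kdelta_neq // zero_of_w0; first ring.
by apply/eqP; rewrite -leqn0 leqNgt -(andTb (0 < w j)%N) -ji no_other.
Qed.

End NearUnitMatrices.

Section TotalMolecularity.
Variable s : nat.
Implicit Types (G : network s) (r : reaction s).

Lemma rev_reactionK : involutive (@rev_reaction s).
Proof. by case. Qed.

(* Reversal swaps inflows and outflows. *)
Lemma is_flow_rev r : is_flow (rev_reaction r) = is_flow r.
Proof. by rewrite /is_flow /is_inflow /is_outflow /= orbC andbC [in X in _ || X]andbC. Qed.

Lemma rev_reaction_neq G r : wf_network G -> r \in G -> rev_reaction r != r.
Proof. by case=> _ hG _ /hG; apply: contraNneq; case: r => ?? [->]. Qed.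

Definition TM_counted G r : bool :=
  ~~ is_flow r &&
  ((rev_reaction r \notin G) || (index r G < index (rev_reaction r) G)%N).

Lemma TME G i : TM G i = (\sum_(r <- G | TM_counted G r) (r.1 i + r.2 i))%N.
Proof. by []. Qed.

Definition TM_rep G r : reaction s :=
  if (rev_reaction r \notin G) || (index r G < index (rev_reaction r) G)%N
  then r else rev_reaction r.

Lemma TM_rep_counted G r : wf_network G -> r \in G -> ~~ is_flow r ->
  TM_rep G r \in [seq x <- G | TM_counted G x].
Proof.
move=> wf rG nfr; rewrite mem_filter /TM_rep /TM_counted.
case: ifP => [-> |]; first by rewrite nfr rG.
move/negbT; rewrite negb_or negbK -leqNgt => /andP[rrG le_rr_r].
rewrite is_flow_rev nfr rrG rev_reactionK rG /= ltn_neqAle le_rr_r !andbT.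
apply: contraNneq (rev_reaction_neq wf rG) => eq_index.
by apply/eqP; rewrite -[RHS](nth_index r rG) -eq_index nth_index.
Qed.

(* Reversing a reaction does not change the molecularity of a species. *)
Lemma TM_rep_molecularity G r i :
  ((TM_rep G r).1 i + (TM_rep G r).2 i = r.1 i + r.2 i)%N.
Proof. by rewrite /TM_rep; case: ifP => // _; rewrite addnC. Qed.

Lemma selection_molecularity_le_TM (I : finType) G (k : I -> reaction s) i :
  wf_network G -> injective k -> (forall a, k a \in G) ->
  (forall a a', k a' != rev_reaction (k a)) ->
  (\sum_(a | ~~ is_flow (k a)) ((k a).1 i + (k a).2 i) <= TM G i)%N.
Proof.
move=> wf k_inj kG no_pair; have uG : uniq G by case: wf.
pose F r := (r.1 i + r.2 i)%N.
pose chosen := [seq TM_rep G (k a) | a <- index_enum I & ~~ is_flow (k a)].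
have -> : (\sum_(a | ~~ is_flow (k a)) F (k a) = \sum_(r <- chosen) F r)%N.
  by rewrite big_map big_filter; apply: eq_bigr => a _; rewrite /F TM_rep_molecularity.
rewrite TME -(big_filter G).
apply: (@uniq_sub_le_big _ addn leq leqnn (fun m n => leq_addr n m) 0%N _ _ _ xpredT).
- rewrite map_inj_in_uniq ?filter_uniq ?index_enum_uniq // => a b _ _.
  rewrite /TM_rep; case: ifP => _; case: ifP => _ eq_rep.
  + exact: k_inj.
  + by move: (no_pair b a); rewrite eq_rep eqxx.
  + by move: (no_pair a b); rewrite -eq_rep eqxx.
  + by apply: k_inj; rewrite -[k a]rev_reactionK eq_rep rev_reactionK.
- exact/filter_uniq.
- move=> r /mapP [a]; rewrite mem_filter => /andP[nfa _] ->.
  exact: TM_rep_counted.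
Qed.

End TotalMolecularity.

Lemma det_opp_rows (R : comPzRingType) n (A : 'M[R]_n) a a' :
  a != a' -> (forall m, A a' m = - A a m) -> \det A = 0.
Proof.
move=> aa' opp_rows.
set B := \matrix_(i, m) (if i == a' then A a m else A i m).
rewrite (@determinant_multilinear _ _ A B A a' (-1) 0).
- rewrite (@determinant_alternate _ _ B a a') ?mulr0 ?mul0r ?addr0 //.
  by move=> m; rewrite !mxE eqxx (negbTE aa').
- by apply/rowP => m; rewrite !mxE eqxx opp_rows mul0r addr0 mulN1r.
- by apply/matrixP => i m; rewrite !mxE eq_sym (negbTE (neq_lift _ _)).
- by [].
Qed.

Lemma outflowP s (r : reaction s) :
  is_outflow r -> exists l, r = (unit_cplx l, zero_cplx s).
Proof.
by case/andP => /existsP [l /eqP r1] /eqP r2; exists l; case: r r1 r2 => ?? /= -> ->.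
Qed.

(* Nonnegativity of the determinant of the reaction matrix of s reactions
   k 0, ..., k (s-1) of a network with all TM <= 2, when reaction a consumes
   species a for every a: the matrix is near-unit unless it contains a
   reversible pair, in which case its determinant vanishes. *)
Section ReactionMatrixDeterminant.
Variables (s : nat) (G : network s) (k : 'I_s -> reaction s).
Hypotheses (wfG : wf_network G) (TM_le2 : forall i, (TM G i <= 2)%N).
Hypotheses (k_inj : injective k) (kG : forall a, k a \in G).
Hypotheses (k_not_inflow : forall a, ~~ is_inflow (k a)).
Hypothesis (consumes_diag : forall a, (0 < (k a).1 a)%N).

Local Notation Rk := (reaction_mx k).

Lemma reaction_mxE a i : Rk a i = Posz ((k a).1 i) - Posz ((k a).2 i).
Proof. by rewrite mxE. Qed.

(* A selected outflow consuming species a must be X_a -> 0, a unit row. *)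
Lemma flow_unit_row a : is_flow (k a) -> unit_row Rk a.
Proof.
rewrite /is_flow (negbTE (k_not_inflow a)) => /outflowP [l kl] m.
have la : l = a by move: (consumes_diag a); rewrite kl /= ffunE; case: eqP.
by rewrite reaction_mxE kl la /= !ffunE subr0 /kdelta eq_sym; case: (a == m).
Qed.

(* Selecting a reaction together with its reverse gives opposite rows. *)
Lemma det_reaction_mx_rev_pair a a' : k a' = rev_reaction (k a) -> \det Rk = 0.
Proof.
move=> kaa'; apply: (@det_opp_rows _ _ _ a a') => [|m].
  by apply: contraNneq (rev_reaction_neq wfG (kG a)) => aa'; rewrite -kaa' -aa'.
by rewrite !reaction_mxE kaa' /=; ring.
Qed.

(* In the column of a non-flow reaction the entries are controlled by the
   molecularities, whose total is bounded by TM <= 2. *)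
Lemma nonflow_perturbed_col i :
  (forall a a', k a' != rev_reaction (k a)) -> ~~ is_flow (k i) ->
  perturbed_unit_col Rk i.
Proof.
move=> no_pair nfi.
pose w j := if ~~ is_flow (k j) then ((k j).1 i + (k j).2 i)%N else 0%N.
apply: (@perturbed_unit_col_of_weights _ _ _ _ w).
- have -> : (\sum_j w j = \sum_(j | ~~ is_flow (k j)) ((k j).1 i + (k j).2 i))%N.
    by rewrite [RHS]big_mkcond.
  exact: leq_trans (selection_molecularity_le_TM i wfG k_inj kG no_pair) (TM_le2 i).
- move=> j; rewrite /w natz; case: ifP => [_|/negbFE fj].
    by rewrite reaction_mxE ler_norml; apply/andP; split; lia.
  have ji : j != i by apply: contraTneq fj => ->.
  by rewrite (flow_unit_row fj) kdelta_neq ?normr0.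
- by rewrite /w nfi natz reaction_mxE; have := consumes_diag i; lia.
Qed.

Lemma det_reaction_mx_ge0 : 0 <= \det Rk.
Proof.
have [[a [a' kaa']]|no_pair] := classic (exists a a', k a' = rev_reaction (k a)).
  by rewrite (det_reaction_mx_rev_pair kaa').
have {}no_pair a a' : k a' != rev_reaction (k a).
  by apply/eqP => kaa'; apply: no_pair; exists a, a'.
apply: det_near_unit_ge0 => i.
have [fi|nfi] := boolP (is_flow (k i)); [right; exact: flow_unit_row|left].
exact: nonflow_perturbed_col.
Qed.

End ReactionMatrixDeterminant.

Lemma det_mul_leibniz (R : comPzRingType) n (M A : 'M[R]_n) :
  \det M * \det A = \sum_(sg : 'S_n) (\prod_i M (sg i) i) * \det (row_perm sg A).
Proof.
rewrite -det_tr [X in X * _ = _]/determinant mulr_suml; apply: eq_bigr => sg _.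
rewrite row_permE det_mulmx det_perm mulrAC mulrC.
by congr (_ * _); apply: eq_bigr => i _; rewrite mxE.
Qed.

Lemma reaction_mx_perm s (k : 'I_s -> reaction s) (sg : 'S_s) :
  reaction_mx (k \o sg) = row_perm sg (reaction_mx k).
Proof. by apply/matrixP => a i; rewrite !mxE. Qed.

(* First half of the theorem: every non-inflow selection has nonnegative
   orientation, since each Leibniz term of det M * det R either has a zero
   reactant factor or is the determinant of a reaction matrix in which
   reaction a consumes species a. *)
Lemma Jacobian_criterion_TM_le2 s (G : network s) :
  is_CFSTR G -> (forall i, (TM G i <= 2)%N) -> passes_Jacobian_criterion G.
Proof.
move=> [wfG _] TM_le2 k k_inj kG k_not_inflow.
rewrite /orientation sgz_ge0 det_mul_leibniz; apply: sumr_ge0 => sg _.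
case: (pickP (fun i => (k (sg i)).1 i == 0%N)) => [i /eqP zero_i|consumes].
  by rewrite (bigD1 i) //= mxE zero_i !mul0r.
apply: mulr_ge0; first by apply: prodr_ge0 => i _; rewrite mxE.
rewrite -reaction_mx_perm; apply: (det_reaction_mx_ge0 wfG TM_le2).
- exact: inj_comp k_inj perm_inj.
- by move=> a; apply: kG.
- by move=> a; apply: k_not_inflow.
- by move=> a; rewrite /= lt0n consumes.
Qed.

Section MonomialSecant.
Variable R : comNzRingType.

(* (a^n - b^n) / (a - b), written as a polynomial in a and b. *)
Definition power_quotient (a b : R) (n : nat) : R :=
  \sum_(q < n) a ^+ (n.-1 - q) * b ^+ q.

Variables (s : nat) (x1 x2 : 'I_s -> R).

(* The coefficient of x1 j - x2 j when x1^y - x2^y is telescoped by switching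
   the variables from x2 to x1 one at a time: variables before j are taken at
   x1, variables after j at x2. *)
Definition monomial_secant (y : cplx s) (j : 'I_s) : R :=
  \prod_(l < s) (if (l < j)%N then x1 l ^+ y l
                 else if l == j then power_quotient (x1 l) (x2 l) (y l)
                 else x2 l ^+ y l).

Lemma monomial_secantE (y : cplx s) :
  monomial x1 y - monomial x2 y = \sum_j monomial_secant y j * (x1 j - x2 j).
Proof.
pose P n := \prod_(l < s) (if (l < n)%N then x1 l ^+ y l else x2 l ^+ y l).
have P0 : P 0%N = monomial x2 y by apply: eq_bigr.
have Ps : P s = monomial x1 y by apply: eq_bigr => l _; rewrite ltn_ord.
have step (j : 'I_s) : P j.+1 - P j = monomial_secant y j * (x1 j - x2 j).
  rewrite /P /monomial_secant (bigD1 j) //= [X in _ - X](bigD1 j) //=.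
  rewrite [in RHS](bigD1 j) //= ltnS leqnn ltnn eqxx.
  set Q := \prod_(l < s | l != j) (if (l < j)%N then x1 l ^+ y l else x2 l ^+ y l).
  have -> : \prod_(l < s | l != j)
      (if (l < j.+1)%N then x1 l ^+ y l else x2 l ^+ y l) = Q.
    apply: eq_bigr => l lj; rewrite ltnS leq_eqVlt.
    by have -> : (nat_of_ord l == nat_of_ord j) = false by apply/negbTE.
  have -> : \prod_(l < s | l != j) (if (l < j)%N then x1 l ^+ y l
      else if l == j then power_quotient (x1 l) (x2 l) (y l) else x2 l ^+ y l) = Q.
    by apply: eq_bigr => l lj; rewrite (negbTE lj).
  by rewrite -mulrBl subrXX /power_quotient; ring.
rewrite -Ps -P0 -(telescope_sumr _ (leq0n s)) big_mkord.
by apply: eq_bigr => j _; rewrite step.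
Qed.

Lemma monomial_secant0 (y : cplx s) j : y j = 0%N -> monomial_secant y j = 0.
Proof.
move=> yj; rewrite /monomial_secant (bigD1 j) //= ltnn eqxx yj.
by rewrite /power_quotient big_ord0 mul0r.
Qed.

End MonomialSecant.

Section MonomialSecantSign.
Variables (R : numDomainType) (s : nat) (x1 x2 : 'I_s -> R).
Hypotheses (x1_pos : forall l, 0 < x1 l) (x2_pos : forall l, 0 < x2 l).

Lemma power_quotient_gt0 (a b : R) n :
  0 < a -> 0 < b -> (0 < n)%N -> 0 < power_quotient a b n.
Proof.
move=> a_pos b_pos; case: n => // n _; rewrite /power_quotient big_ord_recl.
apply: ltr_wpDr; last by apply: mulr_gt0; apply: exprn_gt0.
by apply: sumr_ge0 => q _; apply: mulr_ge0; apply/exprn_ge0/ltW.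
Qed.

Lemma monomial_secant_ge0 (y : cplx s) j : 0 <= monomial_secant x1 x2 y j.
Proof.
apply: prodr_ge0 => l _.
case: ifP => _; first exact/exprn_ge0/ltW.
case: ifP => _; last exact/exprn_ge0/ltW.
by apply: sumr_ge0 => q _; apply: mulr_ge0; apply/exprn_ge0/ltW.
Qed.

Lemma monomial_secant_gt0 (y : cplx s) j :
  (0 < y j)%N -> 0 < monomial_secant x1 x2 y j.
Proof.
move=> yj; apply: prodr_gt0 => l _.
case: ifP => _; first exact: exprn_gt0.
case: ifP => [/eqP -> |_]; [exact: power_quotient_gt0 | exact: exprn_gt0].
Qed.

End MonomialSecantSign.

Lemma det_row_combination (R : comPzRingType) n m (C : 'I_n -> 'I_m -> R)
    (U : 'I_m -> 'I_n -> R) :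
  \det (\matrix_(j, i) \sum_(p < m) C j p * U p i) =
  \sum_(f : {ffun 'I_n -> 'I_m})
    (\prod_j C j (f j)) * \det (\matrix_(j, i) U (f j) i).
Proof.
rewrite /determinant.
transitivity (\sum_(sg : 'S_n) \sum_(f : {ffun 'I_n -> 'I_m})
   (-1) ^+ sg * ((\prod_j C j (f j)) * \prod_j U (f j) (sg j))).
  apply: eq_bigr => sg _.
  rewrite (eq_bigr (fun j => \sum_(p < m) C j p * U p (sg j))) => [|j _]; last first.
    by rewrite mxE.
  by rewrite bigA_distr_bigA mulr_sumr; apply: eq_bigr => f _; rewrite big_split.
rewrite exchange_big; apply: eq_bigr => f _.
rewrite mulr_sumr; apply: eq_bigr => sg _.
rewrite mulrCA; congr (_ * (_ * _)).
by apply: eq_bigr => i _; rewrite mxE.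
Qed.

(* The secant Jacobian L between two states x1, x2: by the discrete mean
   value theorem, f(x2) - f(x1) = L (x1 - x2) for the mass-action field f. *)
Definition secant_jacobian (R : comNzRingType) s (G : network s)
    (kappa : reaction s -> R) (x1 x2 : 'I_s -> R) : 'M[R]_s :=
  \matrix_(i, j) \sum_(r <- G)
     kappa r * monomial_secant x1 x2 r.1 j * ((r.1 i)%:R - (r.2 i)%:R).

Lemma secant_jacobianP (R : comNzRingType) s (G : network s)
    (kappa : reaction s -> R) (x1 x2 : 'I_s -> R) i :
  (secant_jacobian G kappa x1 x2 *m \col_j (x1 j - x2 j)) i 0 =
  mass_action G kappa x2 i - mass_action G kappa x1 i.
Proof.
rewrite mxE /mass_action -sumrB.
under eq_bigr => j _ do rewrite !mxE mulr_suml.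
rewrite exchange_big /=; apply: eq_bigr => r _.
transitivity (kappa r * ((r.1 i)%:R - (r.2 i)%:R) *
              \sum_j monomial_secant x1 x2 r.1 j * (x1 j - x2 j)).
  by rewrite mulr_sumr; apply: eq_bigr => j _; ring.
by rewrite -monomial_secantE; ring.
Qed.

(* Positivity of the secant Jacobian determinant for a CFSTR with all TM <= 2:
   expanding det L^T over the choices of one reaction per species, the choice
   of the outflows X_j -> 0 contributes a positive term and every other choice
   a nonnegative one (by det_reaction_mx_ge0). *)
Section SecantJacobianDeterminant.
Variables (R : realFieldType) (s : nat) (G : network s).
Variables (kappa : reaction s -> R) (x1 x2 : 'I_s -> R).
Hypotheses (G_CFSTR : is_CFSTR G) (TM_le2 : forall i, (TM G i <= 2)%N).
Hypothesis kappa_pos : forall r, r \in G -> 0 < kappa r.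
Hypotheses (x1_pos : forall l, 0 < x1 l) (x2_pos : forall l, 0 < x2 l).

Definition reaction_at (p : 'I_(size G)) : reaction s :=
  nth (zero_cplx s, zero_cplx s) G p.

Lemma reaction_at_in_G p : reaction_at p \in G.
Proof. exact: mem_nth. Qed.

Definition selection_mx (f : {ffun 'I_s -> 'I_(size G)}) : 'M[R]_s :=
  \matrix_(j, i) (((reaction_at (f j)).1 i)%:R - ((reaction_at (f j)).2 i)%:R).

Definition selection_term (f : {ffun 'I_s -> 'I_(size G)}) : R :=
  (\prod_j (kappa (reaction_at (f j)) * monomial_secant x1 x2 (reaction_at (f j)).1 j))
  * \det (selection_mx f).

Lemma det_secant_jacobian_expansion :
  \det (secant_jacobian G kappa x1 x2) = \sum_f selection_term f.
Proof.
rewrite -det_tr /selection_term /selection_mx.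
rewrite -(det_row_combination
  (fun j p => kappa (reaction_at p) * monomial_secant x1 x2 (reaction_at p).1 j)
  (fun p i => ((reaction_at p).1 i)%:R - ((reaction_at p).2 i)%:R)).
congr (\det _); apply/matrixP => j i.
by rewrite !mxE (big_nth (zero_cplx s, zero_cplx s)) big_mkord; apply: eq_bigr.
Qed.

(* A choice in which some species j is not consumed by its reaction has a zero
   coefficient; otherwise det_reaction_mx_ge0 applies. *)
Lemma selection_term_ge0 f : 0 <= selection_term f.
Proof.
have [wfG _] := G_CFSTR; have uG : uniq G by case: wfG.
case: (pickP (fun j => (reaction_at (f j)).1 j == 0%N)) => [j /eqP absent|consumes].
  by rewrite /selection_term (bigD1 j) //= monomial_secant0 ?mulr0 ?mul0r.
apply: mulr_ge0.
  apply: prodr_ge0 => j _; apply: mulr_ge0; last exact: monomial_secant_ge0.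
  exact/ltW/kappa_pos/reaction_at_in_G.
have [/injectiveP f_inj|/injectivePn [a [b ab fab]]] := boolP (injectiveb f);
  last by rewrite (determinant_alternate ab) // => i; rewrite !mxE fab.
have -> : selection_mx f = map_mx intr (reaction_mx (reaction_at \o f)).
  by apply/matrixP => j i; rewrite !mxE intrB.
rewrite det_map_mx ler0z; apply: (det_reaction_mx_ge0 wfG TM_le2).
- move=> a b /eqP; rewrite /= nth_uniq // => /eqP /val_inj; exact: f_inj.
- by move=> a; apply: reaction_at_in_G.
- move=> a; rewrite /is_inflow negb_and; apply/orP; left.
  by apply: contraFN (consumes a) => /eqP /= ->; rewrite ffunE.
- by move=> a; rewrite lt0n consumes.
Qed.

(* Choosing the outflow X_j -> 0 for every species j gives the identity
   reaction matrix and a positive coefficient. *)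
Lemma outflow_selection_gt0 : exists f, 0 < selection_term f.
Proof.
have [_ outflows] := G_CFSTR.
have idx j : (index (unit_cplx j, zero_cplx s) G < size G)%N by rewrite index_mem.
pose f := [ffun j => Ordinal (idx j)].
have outflow_at j : reaction_at (f j) = (unit_cplx j, zero_cplx s).
  by rewrite /reaction_at ffunE nth_index.
exists f; rewrite /selection_term.
have -> : selection_mx f = 1%:M.
  apply/matrixP => j i; rewrite !mxE outflow_at /= !ffunE subr0 eq_sym.
  by case: (i == j).
rewrite det1 mulr1; apply: prodr_gt0 => j _.
apply: mulr_gt0; first exact/kappa_pos/reaction_at_in_G.
by apply: monomial_secant_gt0 => //; rewrite outflow_at /= ffunE eqxx.
Qed.

Lemma det_secant_jacobian_gt0 : 0 < \det (secant_jacobian G kappa x1 x2).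
Proof.
have [f0 f0_pos] := outflow_selection_gt0.
rewrite det_secant_jacobian_expansion (bigD1 f0) //=.
by apply: ltr_wpDr => //; apply: sumr_ge0 => f _; apply: selection_term_ge0.
Qed.

End SecantJacobianDeterminant.

(* Second half of the theorem: two positive steady states x1, x2 satisfy
   L (x1 - x2) = f(x2) - f(x1) = 0 with L invertible, hence coincide. *)
Lemma no_multiple_steady_states_TM_le2 (R : realFieldType) s (G : network s) :
  is_CFSTR G -> (forall i, (TM G i <= 2)%N) -> ~ admits_multiple_steady_states R G.
Proof.
move=> G_CFSTR TM_le2 [kappa [kappa_pos [x1 [x2 [x1_pos x2_pos f1 f2 x12]]]]].
apply: x12; apply: functional_extensionality => j.
set L := secant_jacobian G kappa x1 x2.
have L_unit : L \in unitmx.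
  by rewrite unitmxE unitfE lt0r_neq0 // det_secant_jacobian_gt0.
have L_dx : L *m \col_j (x1 j - x2 j) = 0.
  by apply/matrixP => i z; rewrite ord1 secant_jacobianP f1 f2 subrr mxE.
have := congr1 (fun v : 'cV_s => v j 0) (mulKmx L_unit (\col_j (x1 j - x2 j))).
by rewrite L_dx mulmx0 !mxE => /eqP; rewrite eq_sym subr_eq0 => /eqP.
Qed.

Theorem mainTheorem1 (R : rcfType) (s : nat) (G : network s) :
  is_CFSTR G -> (forall i : 'I_s, (TM G i <= 2)%N) ->
  passes_Jacobian_criterion G /\ ~ admits_multiple_steady_states R G.
Proof.
move=> G_CFSTR TM_le2; split.
- exact: Jacobian_criterion_TM_le2.
- exact: no_multiple_steady_states_TM_le2.
Qed.
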